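(* Every $f=\sum\hat f_{\alpha,\beta;\omega}E_{\alpha,\beta}\star e_\omega\in\mathscr{F}_n(\mathbb{C}^d)$ defines, via formal evaluation $X\mapsto\mathrm{ev}_X(f)=\sum\hat f_{\alpha,\beta;\omega}\,E_{\alpha,\beta}\star e_\omega(X)$, a graded and direct sum-preserving function on $\bigsqcup_{m\ge1}\{X\in\mathbb{C}^{(mn\times mn)\cdot d}:\|X\|_{\mathrm{col}}<\frac1{\sqrt n}\}$.
   Context: Equip $\mathbb{C}^{n\times n}$ with the Hilbert–Schmidt inner product and let $\mathscr{F}_n(\mathbb{C}^d)=\bigoplus_{\ell\ge0}\mathbb{C}^{n\times n}\otimes(\mathbb{C}^d\otimes\mathbb{C}^{n\times n})^{\otimes\ell}$. With $E_{i,j}$ the matrix units of $\mathbb{C}^{n\times n}$ and $e_k$ the standard basis of $\mathbb{C}^d$, for words $\alpha=a_0\cdots a_\ell,\beta=b_0\cdots b_\ell$ in $\{1,\dots,n\}$ and $\omega=w_1\cdots w_\ell$ in $\{1,\dots,d\}$, $E_{\alpha,\beta}\star e_\omega=E_{a_0,b_0}\otimes e_{w_1}\otimes E_{a_1,b_1}\otimes\cdots\otimes e_{w_\ell}\otimes E_{a_\ell,b_\ell}$; these form an orthonormal basis, and $\hat f_{\alpha,\beta;\omega}$ are the coefficients of $f$ in it. For $X\in\mathbb{C}^{(mn\times mn)\cdot d}$ (column $d$-tuples of $mn\times mn$ matrices, $\|X\|_{\mathrm{col}}$ the operator norm of the stacked matrix), $E_{\alpha,\beta}\star e_\omega(X)=(I_m\otimes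 E_{a_0,b_0})X_{w_1}(I_m\otimes E_{a_1,b_1})\cdots X_{w_\ell}(I_m\otimes E_{a_\ell,b_\ell})$. Graded means $\mathrm{ev}_X(f)\in\mathbb{C}^{mn\times mn}$ for $X$ at level $mn$; direct sum-preserving means $\mathrm{ev}_{X\oplus X'}(f)=\mathrm{ev}_X(f)\oplus\mathrm{ev}_{X'}(f)$. *)

From HB Require Import structures.
From mathcomp Require Import all_boot all_order all_algebra.
From mathcomp Require Import complex.
From mathcomp Require Import boolp classical_sets reals.
Set Implicit Arguments. Unset Strict Implicit. Unset Printing Implicit Defensive.
Import Order.TTheory GRing.Theory Num.Theory.
Local Open Scope ring_scope.

Section FockDefs.
Variable R : realType.
Local Notation C := R[i].

(* coefficient families  \hat f_{alpha,beta;omega}: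
   level l, alpha beta : words of length l+1 in {0..n-1},
   omega : word of length l in {0..d-1} *)
Definition coeffs (n d : nat) :=
  forall l : nat, {ffun 'I_l.+1 -> 'I_n} -> {ffun 'I_l.+1 -> 'I_n} ->
                  {ffun 'I_l -> 'I_d} -> C.

Definition level_sqnorm (n d : nat) (fh : coeffs n d) (l : nat) : R :=
  \sum_(a : {ffun 'I_l.+1 -> 'I_n}) \sum_(b : {ffun 'I_l.+1 -> 'I_n})
    \sum_(w : {ffun 'I_l -> 'I_d}) (ComplexField.Normc.normc (fh l a b w)) ^+ 2.

Definition in_fock (n d : nat) (fh : coeffs n d) : Prop :=
  exists B : R, forall N : nat, \sum_(l < N) level_sqnorm fh l <= B.

(* I_m (x) E_{a,b} in C^{mn x mn}: block-diagonal with m copies of E_{a,b};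
   row index i = (block) * n + (inner index) *)
Definition ampE (m n : nat) (a b : 'I_n) : 'M[C]_(m * n) :=
  \matrix_(i, j) (if [&& (i %/ n == j %/ n)%N, (i %% n == a)%N & (j %% n == b)%N]
                  then 1 else 0).

(* E_{alpha,beta} * e_omega (X)
   = (I(x)E_{a0,b0}) X_{w1} (I(x)E_{a1,b1}) ... X_{wl} (I(x)E_{al,bl}) *)
Definition word_eval (m n d l : nat) (a b : {ffun 'I_l.+1 -> 'I_n})
    (w : {ffun 'I_l -> 'I_d}) (X : 'I_d -> 'M[C]_(m * n)) : 'M[C]_(m * n) :=
  foldr (fun (k : 'I_l) (acc : 'M[C]_(m * n)) =>
           ampE m (a (widen_ord (leqnSn l) k)) (b (widen_ord (leqnSn l) k))
             *m X (w k) *m acc)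
        (ampE m (a ord_max) (b ord_max)) (enum 'I_l).

Definition level_eval (m n d : nat) (fh : coeffs n d) (l : nat)
    (X : 'I_d -> 'M[C]_(m * n)) : 'M[C]_(m * n) :=
  \sum_(a : {ffun 'I_l.+1 -> 'I_n}) \sum_(b : {ffun 'I_l.+1 -> 'I_n})
    \sum_(w : {ffun 'I_l -> 'I_d}) fh l a b w *: word_eval a b w X.

Definition partial_eval (m n d : nat) (fh : coeffs n d)
    (X : 'I_d -> 'M[C]_(m * n)) (N : nat) : 'M[C]_(m * n) :=
  \sum_(l < N) level_eval fh l X.

Definition mx_cvg_to (p q : nat) (S : nat -> 'M[C]_(p, q)) (L : 'M[C]_(p, q)) : Prop :=
  forall (i : 'I_p) (j : 'I_q) (eps : R), 0 < eps ->
    exists N0 : nat, forall N : nat, (N0 <= N)%N -> ComplexField.Normc.normc (S N i j - L i j) < eps.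

Definition vnorm (k : nat) (v : 'cV[C]_k) : R :=
  Num.sqrt (\sum_(i < k) (ComplexField.Normc.normc (v i 0)) ^+ 2).

(* ||X||_col : operator norm of the stacked (dk x k) matrix [X_1; ...; X_d] *)
Definition colnorm (d k : nat) (X : 'I_d -> 'M[C]_k) : R :=
  sup [set r : R | exists v : 'cV[C]_k, vnorm v <= 1 /\
         r = Num.sqrt (\sum_(j < d) (vnorm (X j *m v)) ^+ 2)]%classic.

Definition dsum (m m' n d : nat) (X : 'I_d -> 'M[C]_(m * n))
    (X' : 'I_d -> 'M[C]_(m' * n)) : 'I_d -> 'M[C]_((m + m') * n) :=
  fun j => castmx (esym (mulnDl m m' n), esym (mulnDl m m' n))
                  (block_mx (X j) 0 0 (X' j)).

Definition mx_dsum (m m' n : nat) (A : 'M[C]_(m * n)) (B : 'M[C]_(m' * n))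
    : 'M[C]_((m + m') * n) :=
  castmx (esym (mulnDl m m' n), esym (mulnDl m m' n)) (block_mx A 0 0 B).

End FockDefs.

(* Summed over all words of length l, the squared norms of the
   j-th columns of E_{alpha,beta} * e_omega (X) are at most (n ||X||_col^2)^l times
   their value at l = 0: prepending a letter multiplies a word by
   (I (x) E_{a,b}) X_w, and summing over a, b and w costs a factor n ||X||_col^2.
   When ||X||_col < 1/sqrt n, each entry of the level-l part of ev_X(f) is thus
   bounded by the squared norm of the level-l coefficients plus a geometric
   sequence, so the series of levels converges absolutely entrywise.  Every word
   evaluation, hence every level and the limit, commutes with direct sums. *)

From HB Require Import structures.
From mathcomp Require Import all_boot all_order all_algebra.
From mathcomp Require Import complex.
From mathcomp Require Import boolp classical_sets reals.
From mathcomp Require Import topology normedtype sequences.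
From mathcomp Require Import lra zify.
Set Implicit Arguments. Unset Strict Implicit. Unset Printing Implicit Defensive.
Import Order.TTheory GRing.Theory Num.Theory numFieldNormedType.Exports.
Local Open Scope ring_scope.

Local Notation normc := (@ComplexField.Normc.normc _).

Section ComplexModulus.
Variable R : realType.
Implicit Types x : R[i].

Lemma normc_ge0 x : 0 <= normc x.
Proof. by case: x => a b; exact: sqrtr_ge0. Qed.

Lemma normc_real (a : R) : normc a%:C%C = `|a|.
Proof. by rewrite /= expr0n addr0 sqrtr_sqr. Qed.

Lemma normc_sum (I : Type) (r : seq I) (F : I -> R[i]) :
  normc (\sum_(i <- r) F i) <= \sum_(i <- r) normc (F i).
Proof.
elim/big_rec2: _ => [|i y z _ le_yz]; first by rewrite ComplexField.Normc.normc0.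
by apply: le_trans (le_normcD _ _) _; rewrite lerD2l.
Qed.

Lemma normc_Re x : `|complex.Re x| <= normc x.
Proof.
by case: x => a b /=; rewrite -sqrtr_sqr ler_sqrt ?lerDl ?addr_ge0 ?sqr_ge0.
Qed.

Lemma normc_Im x : `|complex.Im x| <= normc x.
Proof.
by case: x => a b /=; rewrite -sqrtr_sqr ler_sqrt ?lerDr ?addr_ge0 ?sqr_ge0.
Qed.

Lemma normc_le_ReIm x : normc x <= `|complex.Re x| + `|complex.Im x|.
Proof.
case: x => a b /=.
rewrite -[X in _ <= X]ger0_norm ?addr_ge0 // -sqrtr_sqr ler_sqrt ?sqr_ge0 //.
rewrite sqrrD -[a ^+ 2]real_normK ?num_real // -[b ^+ 2]real_normK ?num_real //.
by rewrite -addrA lerD2l lerDr mulrn_wge0 // mulr_ge0.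
Qed.

End ComplexModulus.

Section ComplexSeries.
Variable R : realType.
Local Open Scope classical_set_scope.

Lemma is_cvg_series_abs_bounded (x : R ^nat) (M : R) :
  (forall N, \sum_(l < N) `|x l| <= M) -> cvgn (series x).
Proof.
move=> bnd; apply: normed_cvg; apply: nondecreasing_is_cvgn.
  by apply: nondecreasing_series => l _ _; exact: normr_ge0.
by exists M => _ [N _ <-]; rewrite /= seriesEord; exact: bnd.
Qed.

(* The sum of a complex series, taken componentwise: an arbitrary value when the
   real or the imaginary part diverges. *)
Definition limc (t : nat -> R[i]) : R[i] :=
  (limn (series (fun l => complex.Re (t l))) +i*
   limn (series (fun l => complex.Im (t l))))%C.

Lemma limc0 : limc (fun=> 0) = 0.
Proof.
rewrite /limc /= (_ : series _ = fun=> 0) ?lim_cst //.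
by apply/funext => N; rewrite /series /= big1.
Qed.

Lemma limc_cvg (t : nat -> R[i]) (M : R) :
  (forall N, \sum_(l < N) normc (t l) <= M) ->
  forall eps, 0 < eps -> \forall N \near \oo, normc (\sum_(l < N) t l - limc t) < eps.
Proof.
move=> bnd eps eps_gt0.
set u := fun l => complex.Re (t l); set v := fun l => complex.Im (t l).
have bnd_u N : \sum_(l < N) `|u l| <= M.
  by apply: le_trans (bnd N); apply: ler_sum => l _; exact: normc_Re.
have bnd_v N : \sum_(l < N) `|v l| <= M.
  by apply: le_trans (bnd N); apply: ler_sum => l _; exact: normc_Im.
have /cvgrPdist_lt cvg_u := is_cvg_series_abs_bounded (x := u) bnd_u.
have /cvgrPdist_lt cvg_v := is_cvg_series_abs_bounded (x := v) bnd_v.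
have eps2_gt0 : 0 < eps / 2 by rewrite divr_gt0.
near=> N; apply: le_lt_trans (normc_le_ReIm _) _; rewrite (splitr eps).
have -> : complex.Re (\sum_(l < N) t l - limc t) = series u N - limn (series u).
  rewrite (raddfB (@complex.Re R)) (raddf_sum (@complex.Re R)).
  by congr (_ - _); rewrite seriesEord.
have -> : complex.Im (\sum_(l < N) t l - limc t) = series v N - limn (series v).
  rewrite (raddfB (@complex.Im R)) (raddf_sum (@complex.Im R)).
  by congr (_ - _); rewrite seriesEord.
by apply: ltrD; rewrite distrC; near: N; [exact: cvg_u | exact: cvg_v].
Unshelve. all: by end_near. Qed.

End ComplexSeries.

Section EntrywiseLimit.
Variable R : realType.

Definition mxlimc p q (A : nat -> 'M[R[i]]_(p, q)) : 'M[R[i]]_(p, q) :=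
  \matrix_(i, j) limc (fun l => A l i j).

Lemma mxlimc_cvg p q (A : nat -> 'M[R[i]]_(p, q)) :
  (forall i j, exists M, forall N, \sum_(l < N) normc (A l i j) <= M) ->
  mx_cvg_to (fun N => \sum_(l < N) A l) (mxlimc A).
Proof.
move=> bnd i j eps eps_gt0; have [M bndM] := bnd i j.
have [N0 _ cvgN] := limc_cvg (t := fun l => A l i j) bndM eps_gt0.
by exists N0 => N /cvgN; rewrite summxE mxE.
Qed.

Lemma mxlimc_dsum m m' n (A : nat -> 'M[R[i]]_(m * n))
    (B : nat -> 'M[R[i]]_(m' * n)) :
  mxlimc (fun l => mx_dsum (A l) (B l)) = mx_dsum (mxlimc A) (mxlimc B).
Proof.
apply/matrixP => i j; rewrite /mx_dsum castmxE mxE.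
under eq_fun do rewrite castmxE.
case: (split_ordP (cast_ord (esym (esym (mulnDl m m' n))) i)) => i' ->;
case: (split_ordP (cast_ord (esym (esym (mulnDl m m' n))) j)) => j' ->.
- by under eq_fun do rewrite block_mxEul; rewrite block_mxEul mxE.
- by under eq_fun do rewrite block_mxEur mxE; rewrite block_mxEur mxE limc0.
- by under eq_fun do rewrite block_mxEdl mxE; rewrite block_mxEdl mxE limc0.
- by under eq_fun do rewrite block_mxEdr; rewrite block_mxEdr mxE.
Qed.

End EntrywiseLimit.

(* Index [p * n + q]: position [q] inside the [p]-th diagonal block, as in [ampE]. *)
Section BlockIndex.
Variables (m n : nat).

Lemma blk_idx_subproof (p : 'I_m) (q : 'I_n) : (p * n + q < m * n)%N.
Proof. have := ltn_ord p; have := ltn_ord q; nia. Qed.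

Definition blk_idx (p : 'I_m) (q : 'I_n) : 'I_(m * n) := Ordinal (blk_idx_subproof p q).

Lemma blk_idx_div p q : (blk_idx p q %/ n = p)%N.
Proof.
by rewrite /= divnMDl ?divn_small ?addn0 // (leq_ltn_trans (leq0n q) (ltn_ord q)).
Qed.

Lemma blk_idx_mod p q : (blk_idx p q %% n = q)%N.
Proof. by rewrite /= modnMDl modn_small. Qed.

Hypothesis n_gt0 : (0 < n)%N.

Lemma big_blk_idx (V : nmodType) (F : 'I_(m * n) -> V) :
  \sum_k F k = \sum_(p < m) \sum_(q < n) F (blk_idx p q).
Proof.
rewrite pair_big (reindex (fun u : 'I_m * 'I_n => blk_idx u.1 u.2)) //=.
have div_lt (k : 'I_(m * n)) : (k %/ n < m)%N by rewrite ltn_divLR.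
exists (fun k => (Ordinal (div_lt k), Ordinal (ltn_pmod k n_gt0))) => [[p q] _|k _].
  by congr pair; apply: val_inj; [exact: blk_idx_div | exact: blk_idx_mod].
by apply: val_inj; rewrite /= -divn_eq.
Qed.

End BlockIndex.

Section ColumnNorm.
Variable R : realType.

Definition colsq k q (W : 'M[R[i]]_(k, q)) (j : 'I_q) : R :=
  \sum_(r < k) normc (W r j) ^+ 2.

Lemma colsq_ge0 k q (W : 'M[R[i]]_(k, q)) j : 0 <= colsq W j.
Proof. by apply: sumr_ge0 => r _; exact: sqr_ge0. Qed.

Lemma colsq0 k q j : colsq (0 : 'M[R[i]]_(k, q)) j = 0.
Proof.
by rewrite /colsq big1 // => r _; rewrite mxE ComplexField.Normc.normc0 expr0n.
Qed.

Lemma normc_sqr_le_colsq k q (W : 'M[R[i]]_(k, q)) r j :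
  normc (W r j) ^+ 2 <= colsq W j.
Proof.
by rewrite /colsq (bigD1 r) //= lerDl; apply: sumr_ge0 => ? _; exact: sqr_ge0.
Qed.

Lemma colsq_col k q (W : 'M[R[i]]_(k, q)) j : colsq (col j W) 0 = colsq W j.
Proof. by apply: eq_bigr => r _; rewrite mxE. Qed.

Lemma colsq_scale k q (a : R) (W : 'M[R[i]]_(k, q)) j :
  colsq (a%:C%C *: W) j = a ^+ 2 * colsq W j.
Proof.
rewrite /colsq mulr_sumr; apply: eq_bigr => r _.
by rewrite mxE ComplexField.Normc.normcM normc_real exprMn real_normK ?num_real.
Qed.

Lemma colsq_eq0 k (v : 'cV[R[i]]_k) : colsq v 0 = 0 -> v = 0.
Proof.
move=> /eqP; rewrite psumr_eq0 => [/allP v0|r _]; last exact: sqr_ge0.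
apply/matrixP => r z; rewrite ord1 mxE; apply: ComplexField.Normc.eq0_normc.
by apply/eqP; rewrite -sqrf_eq0; apply: v0; rewrite mem_index_enum.
Qed.

Lemma vnormE k (v : 'cV[R[i]]_k) : vnorm v = Num.sqrt (colsq v 0).
Proof. by []. Qed.

Lemma vnorm_sqr k (v : 'cV[R[i]]_k) : vnorm v ^+ 2 = colsq v 0.
Proof. by rewrite vnormE sqr_sqrtr // colsq_ge0. Qed.

Variables (d k : nat) (X : 'I_d -> 'M[R[i]]_k).

Let image_unit_ball := [set r : R | exists v : 'cV[R[i]]_k, vnorm v <= 1 /\
  r = Num.sqrt (\sum_(w < d) (vnorm (X w *m v)) ^+ 2)]%classic.

Lemma image_unit_ball0 : image_unit_ball 0.
Proof.
exists 0; rewrite /vnorm; split.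
  by rewrite big1 ?sqrtr0 // => r _; rewrite mxE ComplexField.Normc.normc0 expr0n.
rewrite big1 ?sqrtr0 // => w _; rewrite mulmx0 big1 ?sqrtr0 ?expr0n // => r _.
by rewrite mxE ComplexField.Normc.normc0 expr0n.
Qed.

Lemma has_sup_image_unit_ball : has_sup image_unit_ball.
Proof.
split; first by exists 0; exact: image_unit_ball0.
exists (Num.sqrt (\sum_(w < d) \sum_(r < k) (\sum_(c < k) normc (X w r c)) ^+ 2)).
move=> _ [v [v_le1 ->]].
have entry_le1 c : normc (v c 0) <= 1.
  rewrite -(expr_le1 (n := 2)) ?normc_ge0 //.
  apply: le_trans (normc_sqr_le_colsq v c 0) _.
  by rewrite -vnorm_sqr expr_le1 // sqrtr_ge0.
rewrite ler_sqrt; last by do 2 (apply: sumr_ge0 => ? _); exact: sqr_ge0.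
apply: ler_sum => w _; rewrite vnorm_sqr; apply: ler_sum => r _.
rewrite ler_sqr ?nnegrE ?normc_ge0 ?sumr_ge0 // => [|c _]; last exact: normc_ge0.
rewrite mxE; apply: le_trans (normc_sum _ _) _; apply: ler_sum => c _.
by rewrite ComplexField.Normc.normcM ler_piMr ?normc_ge0.
Qed.

Lemma colnorm_ge0 : 0 <= colnorm X.
Proof. exact: (sup_upper_bound has_sup_image_unit_ball image_unit_ball0). Qed.

Lemma colnorm_bound (v : 'cV[R[i]]_k) :
  \sum_(w < d) colsq (X w *m v) 0 <= colnorm X ^+ 2 * colsq v 0.
Proof.
have [/colsq_eq0 ->|v_neq0] := eqVneq (colsq v 0) 0.
  by rewrite colsq0 mulr0 big1 // => w _; rewrite mulmx0 colsq0.
set t := Num.sqrt (colsq v 0); set L := \sum_(w < d) colsq (X w *m v) 0.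
have t_gt0 : 0 < t by rewrite sqrtr_gt0 lt_def v_neq0 colsq_ge0.
have t2 : t ^+ 2 = colsq v 0 by rewrite sqr_sqrtr // colsq_ge0.
have L_ge0 : 0 <= L by apply: sumr_ge0 => w _; exact: colsq_ge0.
(* normalize [v] to the unit vector [v / t] and compare with the supremum *)
have image_unit : image_unit_ball (Num.sqrt (t ^-2 * L)).
  exists (t^-1%:C%C *: v); split.
    by rewrite vnormE colsq_scale exprVn t2 mulVf ?sqrtr1.
  congr Num.sqrt; rewrite mulr_sumr; apply: eq_bigr => w _.
  by rewrite vnorm_sqr -scalemxAr colsq_scale exprVn.
have colnormE : colnorm X = sup image_unit_ball by [].
have := sup_upper_bound has_sup_image_unit_ball image_unit; rewrite -colnormE.
rewrite -ler_sqr ?nnegrE ?sqrtr_ge0 ?colnorm_ge0 // sqr_sqrtr; last first.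
  by rewrite mulr_ge0 // invr_ge0 exprn_ge0 // ltW.
by rewrite mulrC ler_pdivrMr ?exprn_gt0 // t2.
Qed.

Lemma colnorm_bound_mx q (B : 'M[R[i]]_(k, q)) j :
  \sum_(w < d) colsq (X w *m B) j <= colnorm X ^+ 2 * colsq B j.
Proof.
rewrite -colsq_col; under eq_bigr do rewrite -colsq_col colE -mulmxA -colE.
exact: colnorm_bound.
Qed.

End ColumnNorm.

Section Amplification.
Variables (R : realType) (m n : nat).
Hypothesis n_gt0 : (0 < n)%N.

Lemma ampE_blk (a b : 'I_n) p c p' c' :
  ampE R m a b (blk_idx p c) (blk_idx p' c') =
  if [&& p == p', c == a & c' == b] then 1 else 0.
Proof. by rewrite mxE !blk_idx_div !blk_idx_mod. Qed.

Lemma mul_ampE_blk q (a b : 'I_n) (U : 'M[R[i]]_(m * n, q)) p c j :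
  (ampE R m a b *m U) (blk_idx p c) j = if c == a then U (blk_idx p b) j else 0.
Proof.
rewrite mxE (big_blk_idx n_gt0) (bigD1 p) //= [X in _ + X]big1 ?addr0;
  last by move=> p' /negbTE ne_p'p; apply: big1 => c' _;
          rewrite ampE_blk eq_sym ne_p'p mul0r.
rewrite (bigD1 b) //= [X in _ + X]big1 ?addr0;
  last by move=> c' /negbTE ne_c'b; rewrite ampE_blk ne_c'b !andbF mul0r.
by rewrite ampE_blk !eqxx andbT; case: (c == a); rewrite ?mul1r ?mul0r.
Qed.

Lemma sum_colsq_mul_ampE q (U : 'M[R[i]]_(m * n, q)) j :
  \sum_(b < n) \sum_(a < n) colsq (ampE R m a b *m U) j = n%:R * colsq U j.
Proof.
have colsq_mul_ampE a b :
    colsq (ampE R m a b *m U) j = \sum_(p < m) normc (U (blk_idx p b) j) ^+ 2.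
  rewrite /colsq (big_blk_idx n_gt0); apply: eq_bigr => p _.
  rewrite (bigD1 a) //= [X in _ + X]big1 ?addr0 ?mul_ampE_blk ?eqxx //.
  move=> c /negbTE ne_ca.
  by rewrite mul_ampE_blk ne_ca ComplexField.Normc.normc0 expr0n.
under eq_bigr do under eq_bigr do rewrite colsq_mul_ampE.
under eq_bigr do rewrite sumr_const card_ord.
by rewrite sumrMnl mulr_natl exchange_big /colsq (big_blk_idx n_gt0).
Qed.

End Amplification.

Section FinfunCons.
Variables (T : Type) (l : nat).

Definition ffun_cons (x : T) (g : {ffun 'I_l -> T}) : {ffun 'I_l.+1 -> T} :=
  [ffun i => if unlift ord0 i is Some k then g k else x].

Lemma ffun_cons0 x g : ffun_cons x g ord0 = x.
Proof. by rewrite ffunE unlift_none. Qed.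

Lemma ffun_consS x g k : ffun_cons x g (lift ord0 k) = g k.
Proof. by rewrite ffunE liftK. Qed.

End FinfunCons.

Lemma big_ffun_cons (T : finType) l (V : nmodType) (G : {ffun 'I_l.+1 -> T} -> V) :
  \sum_f G f = \sum_(g : {ffun 'I_l -> T}) \sum_(x : T) G (ffun_cons x g).
Proof.
rewrite pair_big (reindex (fun u : {ffun 'I_l -> T} * T => ffun_cons u.2 u.1)) //=.
exists (fun f => ([ffun k => f (lift ord0 k)], f ord0)) => [[g x] _|f _] /=.
  by rewrite ffun_cons0; congr pair; apply/ffunP => k; rewrite ffunE ffun_consS.
by apply/ffunP => i; rewrite ffunE; case: unliftP => [k ->|->]; rewrite ?ffunE.
Qed.

Section Words.
Variables (R : realType) (m n d : nat) (X : 'I_d -> 'M[R[i]]_(m * n)).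

Lemma word_eval_cons l (a0 b0 : 'I_n) (w0 : 'I_d) (a b : {ffun 'I_l.+1 -> 'I_n})
    (w : {ffun 'I_l -> 'I_d}) :
  word_eval (ffun_cons a0 a) (ffun_cons b0 b) (ffun_cons w0 w) X =
  ampE R m a0 b0 *m X w0 *m word_eval a b w X.
Proof.
rewrite /word_eval enum_ordSl /= foldr_map.
have -> : widen_ord (leqnSn l.+1) ord0 = ord0 by apply: val_inj.
have -> : (ord_max : 'I_l.+2) = lift ord0 ord_max by apply: val_inj.
rewrite !ffun_cons0 !ffun_consS; congr (_ *m _).
elim: (enum 'I_l) => //= k s ->.
have -> : widen_ord (leqnSn l.+1) (lift ord0 k) = lift ord0 (widen_ord (leqnSn l) k).
  exact: val_inj.
by rewrite !ffun_consS.
Qed.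

Variable j : 'I_(m * n).

Definition words_colsq l : R :=
  \sum_(a : {ffun 'I_l.+1 -> 'I_n}) \sum_(b : {ffun 'I_l.+1 -> 'I_n})
    \sum_(w : {ffun 'I_l -> 'I_d}) colsq (word_eval a b w X) j.

Hypothesis n_gt0 : (0 < n)%N.

Lemma words_colsqS l : words_colsq l.+1 <= n%:R * colnorm X ^+ 2 * words_colsq l.
Proof.
rewrite /words_colsq mulr_sumr big_ffun_cons; apply: ler_sum => a _.
rewrite exchange_big mulr_sumr big_ffun_cons; apply: ler_sum => b _.
under eq_bigr do rewrite exchange_big.
rewrite exchange_big mulr_sumr big_ffun_cons; apply: ler_sum => w _.
under eq_bigr do under eq_bigr do under eq_bigr do rewrite word_eval_cons -mulmxA.
under eq_bigr do rewrite sum_colsq_mul_ampE //.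
rewrite -mulr_sumr -mulrA; apply: ler_wpM2l => //; exact: colnorm_bound_mx.
Qed.

Lemma words_colsq_geometric l :
  words_colsq l <= words_colsq 0 * (n%:R * colnorm X ^+ 2) ^+ l.
Proof.
elim: l => [|l IH]; first by rewrite expr0 mulr1.
apply: le_trans (words_colsqS l) _; set r := n%:R * _ in IH *.
by rewrite exprS mulrCA ler_wpM2l // mulr_ge0 ?sqr_ge0.
Qed.

Lemma normc_level_eval_le (fh : coeffs R n d) l i :
  normc (level_eval fh l X i j) <= level_sqnorm fh l + words_colsq l.
Proof.
rewrite /level_eval /level_sqnorm /words_colsq -!big_split /=.
rewrite summxE; apply: le_trans (normc_sum _ _) _; apply: ler_sum => a _.
rewrite summxE -big_split; apply: le_trans (normc_sum _ _) _; apply: ler_sum => b _.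
rewrite summxE -big_split; apply: le_trans (normc_sum _ _) _; apply: ler_sum => w _.
rewrite mxE ComplexField.Normc.normcM.
apply: le_trans (lerD (lexx _) (normc_sqr_le_colsq _ i j)).
have := normc_ge0 (fh l a b w); have := normc_ge0 (word_eval a b w X i j); nra.
Qed.

End Words.

Lemma sum_expr_le_inv (R : realFieldType) (r : R) N :
  0 <= r -> r < 1 -> \sum_(l < N) r ^+ l <= (1 - r)^-1.
Proof.
move=> r_ge0 r_lt1; have r1_gt0 : 0 < 1 - r by rewrite subr_gt0.
have geomE : (1 - r) * \sum_(l < N) r ^+ l = 1 - r ^+ N.
  rewrite -[1 in RHS](expr1n _ N) subrXX; congr (_ * _).
  by apply: eq_bigr => l _; rewrite expr1n mul1r.
rewrite -[X in X <= _](mulKf (lt0r_neq0 r1_gt0)) geomE.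
apply: ler_piMr; first by rewrite invr_ge0 ltW.
by rewrite gerBl exprn_ge0.
Qed.

Lemma mul_sqr_lt1 (R : rcfType) (x c : R) :
  0 < x -> 0 <= c -> c < 1 / Num.sqrt x -> x * c ^+ 2 < 1.
Proof.
move=> x_gt0 c_ge0; rewrite ltr_pdivlMr ?sqrtr_gt0 // => lt1.
rewrite -[x](sqr_sqrtr (ltW x_gt0)) -exprMn mulrC expr_lt1 ?mulr_ge0 ?sqrtr_ge0 //.
Qed.

Lemma level_eval_summable (R : realType) (m n d : nat) (fh : coeffs R n d)
    (X : 'I_d -> 'M[R[i]]_(m * n)) :
  (0 < n)%N -> in_fock fh -> n%:R * colnorm X ^+ 2 < 1 ->
  forall i j, exists M, forall N,
    \sum_(l < N) normc (level_eval fh l X i j) <= M.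
Proof.
move=> n_gt0 [B sqnorm_le] r_lt1 i j.
set r := n%:R * colnorm X ^+ 2 in r_lt1.
have r_ge0 : 0 <= r by rewrite mulr_ge0 ?sqr_ge0.
exists (B + words_colsq X j 0 * (1 - r)^-1) => N.
apply: (@le_trans _ _ (\sum_(l < N) (level_sqnorm fh l + words_colsq X j l))).
  by apply: ler_sum => l _; exact: normc_level_eval_le.
rewrite big_split; apply: lerD; first exact: sqnorm_le.
apply: (@le_trans _ _ (\sum_(l < N) words_colsq X j 0 * r ^+ l)).
  by apply: ler_sum => l _; exact: words_colsq_geometric.
have words0_ge0 : 0 <= words_colsq X j 0.
  by do 3 (apply: sumr_ge0 => ? _); exact: colsq_ge0.
by rewrite -mulr_sumr ler_wpM2l ?sum_expr_le_inv.
Qed.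

Lemma castmx_mul (T : pzSemiRingType) m1 m2 n1 n2 p1 p2 (em : m1 = m2)
    (en : n1 = n2) (ep : p1 = p2) (A : 'M[T]_(m1, n1)) (B : 'M[T]_(n1, p1)) :
  castmx (em, en) A *m castmx (en, ep) B = castmx (em, ep) (A *m B).
Proof. by case: m2 / em; case: n2 / en; case: p2 / ep; rewrite !castmx_id. Qed.

Lemma castmxD (V : nmodType) m1 m2 n1 n2 (e : (m1 = m2) * (n1 = n2))
    (A B : 'M[V]_(m1, n1)) :
  castmx e (A + B) = castmx e A + castmx e B.
Proof. by apply/matrixP => i j; rewrite !(castmxE, mxE). Qed.

Lemma castmxZ (T : pzRingType) m1 m2 n1 n2 (e : (m1 = m2) * (n1 = n2)) a
    (A : 'M[T]_(m1, n1)) :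
  castmx e (a *: A) = a *: castmx e A.
Proof. by apply/matrixP => i j; rewrite !(castmxE, mxE). Qed.

Lemma castmx0 (V : nmodType) m1 m2 n1 n2 (e : (m1 = m2) * (n1 = n2)) :
  castmx e (0 : 'M[V]_(m1, n1)) = 0.
Proof. by apply/matrixP => i j; rewrite !(castmxE, mxE). Qed.

Section DirectSum.
Variables (R : realType) (m m' n : nat).
Implicit Types (A C : 'M[R[i]]_(m * n)) (B D : 'M[R[i]]_(m' * n)).

Lemma mx_dsum_mul A B C D : mx_dsum A B *m mx_dsum C D = mx_dsum (A *m C) (B *m D).
Proof. by rewrite /mx_dsum castmx_mul mulmx_block !mulmx0 !mul0mx !addr0 !add0r. Qed.

Lemma mx_dsumD A B C D : mx_dsum A B + mx_dsum C D = mx_dsum (A + C) (B + D).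
Proof. by rewrite /mx_dsum -castmxD add_block_mx !addr0. Qed.

Lemma mx_dsumZ (c : R[i]) A B : c *: mx_dsum A B = mx_dsum (c *: A) (c *: B).
Proof. by rewrite /mx_dsum -castmxZ scale_block_mx !scaler0. Qed.

Lemma mx_dsum_sum (I : Type) (r : seq I) (F : I -> 'M[R[i]]_(m * n))
    (G : I -> 'M[R[i]]_(m' * n)) :
  \sum_(i <- r) mx_dsum (F i) (G i) = mx_dsum (\sum_(i <- r) F i) (\sum_(i <- r) G i).
Proof.
elim/big_rec3: _ => [|i S A B _ ->]; last exact: mx_dsumD.
by rewrite /mx_dsum block_mx0 castmx0.
Qed.

Lemma ampE_dsum (a b : 'I_n) :
  ampE R (m + m') a b = mx_dsum (ampE R m a b) (ampE R m' a b).
Proof.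
have n_gt0 : (0 < n)%N := leq_ltn_trans (leq0n a) (ltn_ord a).
apply/matrixP => i j; rewrite /mx_dsum castmxE.
case: (split_ordP (cast_ord (esym (esym (mulnDl m m' n))) i)) => i' ei;
case: (split_ordP (cast_ord (esym (esym (mulnDl m m' n))) j)) => j' ej;
rewrite ei ej ?block_mxEul ?block_mxEur ?block_mxEdl ?block_mxEdr !mxE;
move/(congr1 val): ei => /= ->; move/(congr1 val): ej => /= ->.
- by [].
- have i'_lt : (i' %/ n < m)%N by rewrite ltn_divLR.
  by rewrite divnMDl // (ltn_eqF (leq_trans i'_lt (leq_addr _ _))).
- have j'_lt : (j' %/ n < m)%N by rewrite ltn_divLR.
  by rewrite divnMDl // eq_sym (ltn_eqF (leq_trans j'_lt (leq_addr _ _))).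
- by rewrite !divnMDl // eqn_add2l !modnMDl.
Qed.

Variables (d : nat) (X : 'I_d -> 'M[R[i]]_(m * n)) (X' : 'I_d -> 'M[R[i]]_(m' * n)).

Lemma word_eval_dsum l (a b : {ffun 'I_l.+1 -> 'I_n}) (w : {ffun 'I_l -> 'I_d}) :
  word_eval a b w (dsum X X') = mx_dsum (word_eval a b w X) (word_eval a b w X').
Proof.
rewrite /word_eval; elim: (enum 'I_l) => [|k s IH] /=; first exact: ampE_dsum.
by rewrite IH ampE_dsum !mx_dsum_mul.
Qed.

Lemma level_eval_dsum (fh : coeffs R n d) l :
  level_eval fh l (dsum X X') = mx_dsum (level_eval fh l X) (level_eval fh l X').
Proof.
rewrite /level_eval -mx_dsum_sum; apply: eq_bigr => a _.
rewrite -mx_dsum_sum; apply: eq_bigr => b _.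
rewrite -mx_dsum_sum; apply: eq_bigr => w _.
by rewrite word_eval_dsum mx_dsumZ.
Qed.

End DirectSum.

Theorem mainTheorem9 (R : realType) (n d : nat) (fh : coeffs R n d) :
  (0 < n)%N -> in_fock fh ->
  exists F : forall m : nat, ('I_d -> 'M[R[i]]_(m * n)) -> 'M[R[i]]_(m * n),
    (forall (m : nat) (X : 'I_d -> 'M[R[i]]_(m * n)),
        (0 < m)%N -> colnorm X < 1 / Num.sqrt (n%:R) ->
        mx_cvg_to (partial_eval fh X) (F m X)) /\
    (forall (m m' : nat) (X : 'I_d -> 'M[R[i]]_(m * n))
            (X' : 'I_d -> 'M[R[i]]_(m' * n)),
        (0 < m)%N -> (0 < m')%N ->
        colnorm X < 1 / Num.sqrt (n%:R) -> colnorm X' < 1 / Num.sqrt (n%:R) ->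
        F (m + m')%N (dsum X X') = mx_dsum (F m X) (F m' X')).
Proof.
move=> n_gt0 fock.
exists (fun m X => mxlimc (fun l => level_eval fh l X)); split.
  move=> m X _ small; apply: mxlimc_cvg; apply: level_eval_summable => //.
  by apply: mul_sqr_lt1; rewrite ?ltr0n ?colnorm_ge0.
move=> m m' X X' _ _ _ _; rewrite -mxlimc_dsum.
by congr mxlimc; apply/funext => l; exact: level_eval_dsum.
Qed.
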